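(* (i) For every IFA $\mathcal{A}$ with $n$ states there is a deterministic finite automaton with at most $2^n$ states accepting $L(\mathcal{A})$. (ii) For every $n \ge 3$ there exists an IFA with $n$ states such that every deterministic finite automaton accepting its language has at least $2^n$ states.
   Context: A $\mathbb{Q}$-weighted automaton $\mathcal{A} = (Q, \Sigma, M, \alpha, \eta)$ consists of a finite state set $Q$, finite alphabet $\Sigma$, $M : \Sigma \to \mathbb{Q}^{Q\times Q}$, initial row vector $\alpha \in \mathbb{Q}^Q$, final column vector $\eta \in \mathbb{Q}^Q$; with $M(a_1\cdots a_k) = M(a_1)\cdots M(a_k)$, it assigns $L_\mathcal{A}(w) = \alpha M(w)\eta$ to each $w \in \Sigma^*$. It is an IFA if $L_\mathcal{A}(w) \in \{0,1\}$ for all $w$, and then $L(\mathcal{A}) = \{w \mid L_\mathcal{A}(w) = 1\}$. The number of states of $\mathcal{A}$ is $|Q|$. *)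

From HB Require Import structures.
From mathcomp Require Import all_boot all_order all_algebra.
Set Implicit Arguments. Unset Strict Implicit. Unset Printing Implicit Defensive.
Import GRing.Theory Num.Theory.
Local Open Scope ring_scope.

Record wautomaton (Sigma : finType) (n : nat) := WAutomaton {
  wa_M : Sigma -> 'M[rat]_n;
  wa_alpha : 'rV[rat]_n;
  wa_eta : 'cV[rat]_n }.

Definition wa_word_mx (Sigma : finType) (n : nat) (A : wautomaton Sigma n)
  (w : seq Sigma) : 'M[rat]_n :=
  foldr (fun a B => wa_M A a *m B) 1%:M w.

Definition wa_weight (Sigma : finType) (n : nat) (A : wautomaton Sigma n)
  (w : seq Sigma) : rat :=
  (wa_alpha A *m wa_word_mx A w *m wa_eta A) ord0 ord0.

Definition is_IFA (Sigma : finType) (n : nat) (A : wautomaton Sigma n) : Prop :=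
  forall w : seq Sigma, wa_weight A w = 0 \/ wa_weight A w = 1.

Definition IFA_lang (Sigma : finType) (n : nat) (A : wautomaton Sigma n)
  (w : seq Sigma) : Prop := wa_weight A w = 1.

Record dfa (Sigma : finType) := DFA {
  dfa_state : finType;
  dfa_start : dfa_state;
  dfa_trans : dfa_state -> Sigma -> dfa_state;
  dfa_final : pred dfa_state }.

Definition dfa_accepts (Sigma : finType) (D : dfa Sigma) (w : seq Sigma) : bool :=
  @dfa_final Sigma D (foldl (@dfa_trans Sigma D) (@dfa_start Sigma D) w).

Definition dfa_accepts_lang (Sigma : finType) (D : dfa Sigma)
  (L : seq Sigma -> Prop) : Prop :=
  forall w : seq Sigma, dfa_accepts D w <-> L w.

(** Upper bound: after reading a prefix u, a DFA only needs to remember the weights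
    L(u v_1), ..., L(u v_k) for suffixes v_1, ..., v_k whose vectors M(v_i) eta span
    all the vectors M(v) eta; such suffixes exist with k <= n, every weight L(u v)
    is a fixed linear combination of the remembered ones, and each of them is 0 or 1,
    so 2^k <= 2^n states suffice.

    Lower bound: over the alphabet of letters "reset to state i" and "delete state i",
    whose matrices are those of partial maps on the states, a word is accepted iff
    its partial map is defined at state 0.  Deleting the states outside a set T and
    then resetting to i is accepted iff i is in T, so the 2^n words deleting the
    complements of the sets T must lead to pairwise distinct DFA states. *)

From mathcomp Require Import all_boot all_order all_algebra.
From Stdlib Require Import Classical.
From mathcomp Require Import zify.
Set Implicit Arguments. Unset Strict Implicit. Unset Printing Implicit Defensive.
Import GRing.Theory Num.Theory.
Local Open Scope ring_scope.

Lemma natr_bool_eq1 (b : bool) : (b%:R == 1 :> rat) = b.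
Proof. by case: b; rewrite ?eqxx // eq_sym oner_eq0. Qed.

Lemma dfa_acceptsE (Sigma : finType) (n : nat) (A : wautomaton Sigma n)
    (D : dfa Sigma) :
  dfa_accepts_lang D (IFA_lang A) -> forall w, dfa_accepts D w = (wa_weight A w == 1).
Proof. by move=> accD w; apply/idP/eqP => /accD. Qed.

Definition bool_col (k : nat) (b : {ffun 'I_k -> bool}) : 'cV[rat]_k :=
  \col_i (b i)%:R.

Section IFAtoDFA.
Variables (Sigma : finType) (n : nat) (A : wautomaton Sigma n).

Lemma wa_word_mx_cat u v :
  wa_word_mx A (u ++ v) = wa_word_mx A u *m wa_word_mx A v.
Proof.
elim: u => [|a u IHu]; first exact: esym (mul1mx _).
by rewrite -[LHS]/(wa_M A a *m wa_word_mx A (u ++ v)) IHu mulmxA.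
Qed.

Definition prefix_vec u : 'cV[rat]_n := (wa_alpha A *m wa_word_mx A u)^T.
Definition suffix_vec v : 'rV[rat]_n := (wa_word_mx A v *m wa_eta A)^T.

Lemma wa_weight_cat u v :
  wa_weight A (u ++ v) = (suffix_vec v *m prefix_vec u) 0 0.
Proof.
by rewrite /wa_weight wa_word_mx_cat /suffix_vec /prefix_vec -trmx_mul [in RHS]mxE !mulmxA.
Qed.

Definition suffix_mx (vs : seq (seq Sigma)) : 'M[rat]_(size vs, n) :=
  \matrix_i suffix_vec (nth [::] vs i).

Definition spans_suffixes vs := forall v, (suffix_vec v <= suffix_mx vs)%MS.

Lemma suffix_mx_cons_rank v vs :
  \rank (suffix_mx vs) = size vs -> ~~ (suffix_vec v <= suffix_mx vs)%MS ->
  \rank (suffix_mx (v :: vs)) = (size vs).+1.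
Proof.
move=> free_vs v_notin.
have sub_vs : (suffix_mx vs <= suffix_mx (v :: vs))%MS.
  apply/row_subP => i; rewrite rowK.
  by have := row_sub (lift ord0 i) (suffix_mx (v :: vs)); rewrite rowK.
have v_in : (suffix_vec v <= suffix_mx (v :: vs))%MS.
  by have := row_sub ord0 (suffix_mx (v :: vs)); rewrite rowK.
have rank_neq : \rank (suffix_mx vs) != \rank (suffix_mx (v :: vs)).
  rewrite (mxrank_leqif_sup sub_vs).2; apply: contra v_notin => sub_v.
  exact: submx_trans v_in sub_v.
move: (mxrankS sub_vs) rank_neq (rank_leq_row (suffix_mx (v :: vs))).
by rewrite free_vs /=; lia.
Qed.

Lemma exists_spanning_suffixes : exists2 vs, (size vs <= n)%N & spans_suffixes vs.
Proof.
suff extend vs : \rank (suffix_mx vs) = size vs ->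
    exists2 vs', (size vs' <= n)%N & spans_suffixes vs'.
  by apply: (extend [::]); apply/eqP; rewrite -leqn0 rank_leq_row.
have [d] := ubnP (n - size vs); elim: d vs => // d IHd vs lt_size free_vs.
have [span_vs|] := classic (spans_suffixes vs).
  by exists vs; rewrite // -free_vs rank_leq_col.
case/not_all_ex_not => v /negP v_notin.
have free_v_vs := suffix_mx_cons_rank free_vs v_notin.
apply: (IHd (v :: vs)) => //=.
by have := rank_leq_col (suffix_mx (v :: vs)); rewrite free_v_vs; lia.
Qed.

Section ProbeDFA.
Variable vs : seq (seq Sigma).
Local Notation k := (size vs).

Definition suffix_coord v : 'rV[rat]_k := suffix_vec v *m pinvmx (suffix_mx vs).

Definition probe_state (u : seq Sigma) : {ffun 'I_k -> bool} :=
  [ffun i : 'I_k => wa_weight A (u ++ nth [::] vs i) == 1].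

(* The transition from [probe_state u] recomputes the weights L(u a v_i) as linear
   combinations of the remembered weights L(u v_j). *)
Definition probe_dfa : dfa Sigma :=
  @DFA Sigma {ffun 'I_k -> bool} (probe_state [::])
    (fun b a => [ffun i : 'I_k => (suffix_coord (a :: nth [::] vs i) *m bool_col b) 0 0 == 1])
    (fun b => (suffix_coord [::] *m bool_col b) 0 0 == 1).

Lemma card_probe_dfa : #|dfa_state probe_dfa| = (2 ^ k)%N.
Proof. by rewrite card_ffun card_bool card_ord. Qed.

Hypothesis vs_spans : spans_suffixes vs.
Hypothesis A_IFA : is_IFA A.

Lemma suffix_mx_prefix_vec u : suffix_mx vs *m prefix_vec u = bool_col (probe_state u).
Proof.
apply/colP => i; rewrite !mxE ffunE.
have -> : \sum_j suffix_mx vs i j * prefix_vec u j 0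
          = wa_weight A (u ++ nth [::] vs i).
  by rewrite wa_weight_cat mxE; apply: eq_bigr => j _; rewrite mxE.
by case: (A_IFA (u ++ nth [::] vs i)) => ->; rewrite ?eqxx // eq_sym oner_eq0.
Qed.

Lemma wa_weight_cat_probe u v :
  wa_weight A (u ++ v) = (suffix_coord v *m bool_col (probe_state u)) 0 0.
Proof.
by rewrite -suffix_mx_prefix_vec mulmxA mulmxKpV // wa_weight_cat.
Qed.

Lemma probe_dfa_run u w :
  foldl (@dfa_trans _ probe_dfa) (probe_state u) w = probe_state (u ++ w).
Proof.
elim: w u => [|a w IHw] u /=; first by rewrite cats0.
rewrite -cat_rcons -IHw; congr foldl; apply/ffunP => i.
by rewrite !ffunE -wa_weight_cat_probe cat_rcons.
Qed.

Lemma probe_dfa_accepts : dfa_accepts_lang probe_dfa (IFA_lang A).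
Proof.
move=> w; rewrite /dfa_accepts /IFA_lang -[w]cat0s probe_dfa_run /=.
by rewrite -wa_weight_cat_probe cats0; split => /eqP.
Qed.

End ProbeDFA.

Lemma IFA_dfa_upper_bound : is_IFA A ->
  exists D : dfa Sigma,
    (#|dfa_state D| <= 2 ^ n)%N /\ dfa_accepts_lang D (IFA_lang A).
Proof.
move=> A_IFA; have [vs size_vs vs_spans] := exists_spanning_suffixes.
exists (probe_dfa vs); split; last exact: probe_dfa_accepts.
by rewrite card_probe_dfa leq_pexp2l.
Qed.

End IFAtoDFA.

Section PartialMapMatrices.
Variable n : nat.

Definition pfun_mx (g : 'I_n -> option 'I_n) : 'M[rat]_n :=
  \matrix_(i, j) (g j == Some i)%:R.

Lemma sum_pfun_mx_col (F : 'I_n -> rat) g j :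
  \sum_i F i * pfun_mx g i j = oapp F 0 (g j).
Proof.
under eq_bigr => i _ do rewrite mxE.
case: (g j) => [l|] /=; last by rewrite big1 // => i _; rewrite mulr0.
rewrite (bigD1 l) //= eqxx mulr1 big1 ?addr0 // => i /negbTE ne_il.
by rewrite (inj_eq (@Some_inj _)) eq_sym ne_il mulr0.
Qed.

Lemma pfun_mx_mul g h :
  pfun_mx g *m pfun_mx h = pfun_mx (fun j => obind g (h j)).
Proof.
apply/matrixP => i j; rewrite [LHS]mxE sum_pfun_mx_col [RHS]mxE.
by case: (h j) => [l|] //=; rewrite mxE.
Qed.

Lemma pfun_mx_Some : pfun_mx (@Some _) = 1%:M.
Proof. by apply/matrixP => i j; rewrite !mxE (inj_eq (@Some_inj _)) eq_sym. Qed.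

End PartialMapMatrices.

Section SubsetAutomaton.
Variable n : nat.
Local Notation letter := ('I_n.+1 + 'I_n.+1)%type.

Definition letter_pfun (a : letter) (j : 'I_n.+1) : option 'I_n.+1 :=
  match a with
  | inl i => Some i
  | inr i => if j == i then None else Some j
  end.

Definition word_pfun (w : seq letter) : 'I_n.+1 -> option 'I_n.+1 :=
  foldr (fun a g j => obind (letter_pfun a) (g j)) (@Some _) w.

Definition subset_ifa : wautomaton letter n.+1 :=
  WAutomaton (fun a => pfun_mx (letter_pfun a)) (const_mx 1) (delta_mx 0 0).

Lemma word_pfun_cat u v j : word_pfun (u ++ v) j = obind (word_pfun u) (word_pfun v j).
Proof.
elim: u => [|a u IHu] /=; first by case: (word_pfun v j).
by rewrite IHu; case: (word_pfun v j).
Qed.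

Lemma subset_ifa_word_mx w : wa_word_mx subset_ifa w = pfun_mx (word_pfun w).
Proof.
elim: w => [|a w IHw] /=; first by rewrite pfun_mx_Some.
by rewrite IHw pfun_mx_mul.
Qed.

Lemma subset_ifa_weight w : wa_weight subset_ifa w = (word_pfun w ord0 != None)%:R.
Proof.
rewrite /wa_weight subset_ifa_word_mx -mulmxA -colE mxE.
under eq_bigr => i _ do rewrite [const_mx _ _ _]mxE [col _ _ _ _]mxE.
by rewrite sum_pfun_mx_col; case: (word_pfun w ord0).
Qed.

Lemma subset_ifa_is_IFA : is_IFA subset_ifa.
Proof. by move=> w; rewrite subset_ifa_weight; case: (word_pfun w ord0); [right | left]. Qed.

Definition delete_word (T : {ffun 'I_n.+1 -> bool}) : seq letter :=
  [seq inr i | i <- enum 'I_n.+1 & ~~ T i].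

Lemma word_pfun_delete s j :
  word_pfun [seq inr i | i <- s] j = if j \in s then None else Some j.
Proof.
elim: s => [|i s IHs] //=; rewrite IHs in_cons.
by case: (j \in s); rewrite ?orbT //= orbF.
Qed.

Lemma subset_ifa_accepts_delete_reset T i :
  (wa_weight subset_ifa (delete_word T ++ [:: inl i]) == 1) = T i.
Proof.
rewrite subset_ifa_weight word_pfun_cat /= /delete_word.
rewrite (word_pfun_delete [seq j <- enum 'I_n.+1 | ~~ T j]) mem_filter mem_enum andbT.
by rewrite natr_bool_eq1; case: (T i).
Qed.

Lemma subset_ifa_dfa_lower_bound (D : dfa letter) :
  dfa_accepts_lang D (IFA_lang subset_ifa) -> (2 ^ n.+1 <= #|dfa_state D|)%N.
Proof.
move=> accD; pose state T := foldl (@dfa_trans _ D) (dfa_start D) (delete_word T).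
have state_inj : injective state.
  move=> T T' eq_state; apply/ffunP => i.
  have := dfa_acceptsE accD (delete_word T ++ [:: inl i]).
  have := dfa_acceptsE accD (delete_word T' ++ [:: inl i]).
  rewrite /dfa_accepts !foldl_cat -/(state T) -/(state T') eq_state.
  by rewrite (subset_ifa_accepts_delete_reset T) (subset_ifa_accepts_delete_reset T') => -> ->.
by have := leq_card state state_inj; rewrite card_ffun card_bool card_ord.
Qed.

End SubsetAutomaton.

Local Close Scope ring_scope.

Theorem corollary2 :
  (forall (Sigma : finType) (n : nat) (A : wautomaton Sigma n),
      is_IFA A ->
      exists D : dfa Sigma,
        #|@dfa_state Sigma D| <= 2 ^ n /\ dfa_accepts_lang D (IFA_lang A))
  /\
  (forall n : nat, 3 <= n ->
      exists (Sigma : finType) (A : wautomaton Sigma n),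
        is_IFA A /\
        forall D : dfa Sigma, dfa_accepts_lang D (IFA_lang A) ->
          2 ^ n <= #|@dfa_state Sigma D|).
Proof.
split; first exact: IFA_dfa_upper_bound.
(* The lower-bound construction works for every n >= 1. *)
case=> [|n] // _.
exists ('I_n.+1 + 'I_n.+1)%type, (subset_ifa n).
by split; [exact: subset_ifa_is_IFA | exact: subset_ifa_dfa_lower_bound].
Qed.
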